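(* Let $r\ge 2$ and $k\ge 3$ be integers and let $\widehat{F}_k$ be any $r$-coloring of the complete graph $K_k$. For every natural number $n$, there exists a complete multipartite graph on $n$ vertices which is $(r,\widehat{F}_k)$-extremal.
   Context: All graphs are finite and simple. An $r$-coloring of a graph is an arbitrary (not necessarily proper) assignment of colors from $\{1,\dots,r\}$ to its edges. The pattern of a colored graph is the partition of its edge set into (nonempty) color classes; names of colors are ignored. Given an $r$-coloring of a graph $G$, a copy of $\widehat{F}_k$ is a set of $k$ pairwise adjacent vertices of $G$ such that there is a bijection from these vertices to $V(K_k)$ under which two edges receive the same color in $G$ if and only if their images receive the same color in $\widehat{F}_k$ (i.e., the induced color pattern is isomorphic to that of $\widehat{F}_k$). A coloring of $G$ is $\widehat{F}_k$-free if it contains no copy of $\widehat{F}_k$. $c_{r,\widehat{F}_k}(G)$ denotes the number of $\widehat{F}_k$-free $r$-colorings of $E(G)$, and $c_{r,\widehat{F}_k}(n)$ is the maximum of $c_{r,\widehat{F}_k}(G)$ over all graphs $G$ on $n$ vertices. A graph $G$ on $n$ vertices is $(r,\widehat{F}_k)$-extremal if $c_{r,\widehat{F}_k}(G)=c_{r,\widehat{F}_k}(n)$. *)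

From mathcomp Require Import all_boot.
Set Implicit Arguments. Unset Strict Implicit. Unset Printing Implicit Defensive.

Definition simple_graph (n : nat) (G : {set {set 'I_n}}) : bool :=
  [forall e in G, #|e| == 2].

Definition complete_multipartite (n : nat) (G : {set {set 'I_n}}) : Prop :=
  exists p : 'I_n -> nat, forall e : {set 'I_n},
    (e \in G) = [exists u, exists v, (p u != p v) && (e == [set u; v])].

Definition edgeT (n : nat) (G : {set {set 'I_n}}) := {e : {set 'I_n} | e \in G}.

Definition ecol (n r : nat) (G : {set {set 'I_n}}) (c : {ffun edgeT G -> 'I_r})
  (e : {set 'I_n}) : option 'I_r := omap c (insub e : option (edgeT G)).

(* phi : 'I_k -> 'I_n embeds a copy of the colored clique F (F gives the color of
   each 2-subset {i,j} of 'I_k) : phi is injective, its image is pairwise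
   adjacent, and the induced color pattern is that of F. *)
Definition is_copy (n k r : nat) (G : {set {set 'I_n}}) (F : {set 'I_k} -> 'I_r)
  (c : {ffun edgeT G -> 'I_r}) (phi : 'I_k -> 'I_n) : bool :=
  injectiveb phi &&
  [forall i, forall j, (i != j) ==> ([set phi i; phi j] \in G)] &&
  [forall i, forall j, forall i', forall j',
     ((i != j) && (i' != j')) ==>
     ((ecol c [set phi i; phi j] == ecol c [set phi i'; phi j'])
        == (F [set i; j] == F [set i'; j']))].

Definition Ffree (n k r : nat) (G : {set {set 'I_n}}) (F : {set 'I_k} -> 'I_r)
  (c : {ffun edgeT G -> 'I_r}) : bool :=
  [forall phi : {ffun 'I_k -> 'I_n}, ~~ is_copy F c phi].

Definition count_free (n k r : nat) (G : {set {set 'I_n}}) (F : {set 'I_k} -> 'I_r)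
  : nat := #|[set c : {ffun edgeT G -> 'I_r} | Ffree F c]|.

Definition extremal (n k r : nat) (F : {set 'I_k} -> 'I_r) (G : {set {set 'I_n}})
  : Prop :=
  simple_graph G /\
  forall G' : {set {set 'I_n}}, simple_graph G' -> count_free G' F <= count_free G F.

From mathcomp Require Import all_boot perm zify.
Set Implicit Arguments. Unset Strict Implicit. Unset Printing Implicit Defensive.

(* Zykov symmetrization.  If [u] and [w] are non-adjacent, no copy of F meets
   both, so the F-free colorings of G are the pairs of F-free colorings of
   G - w and G - u that agree on G - u - w.  Making [w] a twin of [u] (or [u] a
   twin of [w]) turns this count into a sum of squares over the colorings of
   G - u - w, and 2xy <= x^2 + y^2 shows that if G is extremal then so are both
   clones.  An extremal graph maximising the sum of the squared sizes of its
   twin classes therefore has no non-adjacent pair of non-twins, that is, it is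
   complete multipartite. *)

Section PartialColorings.
Variables (n k r : nat) (F : {set 'I_k} -> 'I_r).

(* A coloring of the edges of a graph, extended by [None] to all other sets;
   the graph is recovered as its domain [pdom]. *)
Definition pcoloring := {ffun {set 'I_n} -> option 'I_r}.

Definition pcopy (f : pcoloring) (phi : {ffun 'I_k -> 'I_n}) : bool :=
  injectiveb phi &&
  [forall i, forall j, (i != j) ==> (f [set phi i; phi j] != None)] &&
  [forall i, forall j, forall i', forall j',
     ((i != j) && (i' != j')) ==>
     ((f [set phi i; phi j] == f [set phi i'; phi j'])
        == (F [set i; j] == F [set i'; j']))].

Definition pfree (f : pcoloring) : bool := [forall phi, ~~ pcopy f phi].

Definition pdom (f : pcoloring) : {set {set 'I_n}} := [set e | f e != None].

Definition free_pcolorings (G : {set {set 'I_n}}) :=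
  [set f : pcoloring | (pdom f == G) && pfree f].

Lemma pcopy_edge f (phi : {ffun 'I_k -> 'I_n}) i j :
  pcopy f phi -> i != j -> f [set phi i; phi j] != None.
Proof. by case/andP=> /andP[_ /forallP/(_ i)/forallP/(_ j)/implyP]. Qed.

Lemma eq_pcopy (f g : pcoloring) (phi : {ffun 'I_k -> 'I_n}) :
  (forall i j, i != j -> g [set phi i; phi j] = f [set phi i; phi j]) ->
  pcopy g phi = pcopy f phi.
Proof.
move=> fg; rewrite /pcopy; congr (_ && _ && _).
  apply: eq_forallb => i; apply: eq_forallb => j.
  by case: (eqVneq i j) => //= ij; rewrite fg.
do 4 apply: eq_forallb => ?.
by case: (eqVneq _ _) => //= ?; case: (eqVneq _ _) => //= ?; rewrite !fg.
Qed.

Lemma pcopy_sub (f g : pcoloring) (phi : {ffun 'I_k -> 'I_n}) :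
  (forall e, g e != None -> g e = f e) -> pcopy g phi -> pcopy f phi.
Proof.
move=> gf cp; rewrite -(@eq_pcopy f g) // => i j ij.
exact/gf/(pcopy_edge cp).
Qed.

Definition erase_at (a b : 'I_n) (f : pcoloring) : pcoloring :=
  [ffun e : {set 'I_n} => if (a \in e) && (b \notin e) then None else f e].

Lemma pcopy_erase_at a b f (phi : {ffun 'I_k -> 'I_n}) :
  pcopy (erase_at a b f) phi -> pcopy f phi.
Proof. by apply: pcopy_sub => e; rewrite ffunE; case: ifP; rewrite ?eqxx. Qed.

Lemma pfree_erase_at a b f : pfree f -> pfree (erase_at a b f).
Proof.
move=> /forallP free_f; apply/forallP => phi.
by apply: contraNN (free_f phi); apply: pcopy_erase_at.
Qed.

(* A copy cannot use both ends of the non-edge [uw], so it survives one of the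
   two erasures. *)
Lemma pfree_nonedge (u w : 'I_n) (f : pcoloring) :
  u != w -> f [set u; w] = None ->
  pfree f = pfree (erase_at w u f) && pfree (erase_at u w f).
Proof.
move=> uw fuw; apply/idP/andP => [free_f|[/forallP free_w /forallP free_u]].
  by split; apply: pfree_erase_at.
apply/forallP => phi; apply/negP => cp.
have avoid a b : ~~ [exists i, phi i == a] -> pcopy (erase_at a b f) phi.
  move=> /existsPn na; rewrite (eq_pcopy (f := f)) // => i j _.
  rewrite ffunE !inE; case: ifP => // /andP[/orP[] /eqP ai _].
  - by move: (na i); rewrite ai eqxx.
  - by move: (na j); rewrite ai eqxx.
case: (boolP [exists i, phi i == w]) => [/existsP[i /eqP phi_i] | nw]; last first.
  by move: (free_w phi); rewrite avoid.
case: (boolP [exists j, phi j == u]) => [/existsP[j /eqP phi_j] | nu]; last first.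
  by move: (free_u phi); rewrite avoid.
have ji : j != i by apply: contra_neq uw => ji; rewrite -phi_i -phi_j ji.
by move: (pcopy_edge cp ji); rewrite phi_i phi_j fuw.
Qed.

End PartialColorings.

Section Erase.
Variables (n r : nat).
Implicit Types (a b u w : 'I_n) (f g h : pcoloring n r).

Lemma pdom_erase_at a b f :
  pdom (erase_at a b f) = [set e in pdom f | (a \in e) ==> (b \in e)].
Proof.
apply/setP => e; rewrite !inE ffunE.
by case: (a \in e); case: (b \in e); rewrite /= ?andbT ?andbF.
Qed.

Lemma pdom_neqNone f (H : {set {set 'I_n}}) e : pdom f = H -> (f e != None) = (e \in H).
Proof. by move<-; rewrite inE. Qed.

Lemma erase_atC a b f : erase_at a b (erase_at b a f) = erase_at b a (erase_at a b f).
Proof. by apply/ffunP => e; rewrite !ffunE; case: (a \in e); case: (b \in e). Qed.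

Definition glue_at u w g h : pcoloring n r :=
  [ffun e : {set 'I_n} => if (w \in e) && (u \notin e) then h e else g e].

Lemma erase_at_glue u w g h :
  (forall e : {set 'I_n}, w \in e -> g e = None) ->
  (forall e : {set 'I_n}, u \in e -> h e = None) ->
  erase_at u w g = erase_at w u h ->
  erase_at w u (glue_at u w g h) = g /\ erase_at u w (glue_at u w g h) = h.
Proof.
move=> gw hu gh; split; apply/ffunP => e; rewrite !ffunE;
  case: (boolP (u \in e)) => ue; case: (boolP (w \in e)) => we //=.
- by rewrite gw.
- by rewrite gw // hu.
- by rewrite hu.
- by move/ffunP: gh => /(_ e); rewrite !ffunE (negbTE ue) (negbTE we).
Qed.

End Erase.

Section ColoringsAsPartialColorings.
Variables (n k r : nat) (F : {set 'I_k} -> 'I_r).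

Definition pcoloring_of (G : {set {set 'I_n}}) (c : {ffun edgeT G -> 'I_r}) :
  pcoloring n r := [ffun e => ecol c e].

Lemma ecol_neqNone (G : {set {set 'I_n}}) (c : {ffun edgeT G -> 'I_r}) e :
  (ecol c e != None) = (e \in G).
Proof. by rewrite /ecol; case: insubP => [u -> _|/negbTE ->]. Qed.

Lemma ecol_val (G : {set {set 'I_n}}) (c : {ffun edgeT G -> 'I_r}) (e : edgeT G) :
  ecol c (val e) = Some (c e).
Proof. by rewrite /ecol valK. Qed.

Lemma is_copyE (G : {set {set 'I_n}}) (c : {ffun edgeT G -> 'I_r})
    (phi : {ffun 'I_k -> 'I_n}) :
  is_copy F c phi = pcopy F (pcoloring_of c) phi.
Proof.
rewrite /is_copy /pcopy; congr (_ && _ && _).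
  by do 2 apply: eq_forallb => ?; rewrite ffunE ecol_neqNone.
by do 4 apply: eq_forallb => ?; rewrite !ffunE.
Qed.

Lemma pcoloring_of_inj (G : {set {set 'I_n}}) : injective (@pcoloring_of G).
Proof.
move=> c1 c2 /ffunP c12; apply/ffunP => e.
by move: (c12 (val e)); rewrite !ffunE !ecol_val => -[].
Qed.

(* The color [d] only fills in values that are never read. *)
Lemma count_freeE (d : 'I_r) (G : {set {set 'I_n}}) :
  count_free G F = #|free_pcolorings F G|.
Proof.
rewrite /count_free -(card_imset _ (@pcoloring_of_inj G)); apply: eq_card => f.
rewrite !inE; apply/imsetP/andP => [[c]|[/eqP domf free_f]].
  rewrite inE => /forallP free_c ->; split.
    by apply/eqP/setP => e; rewrite !inE ffunE ecol_neqNone.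
  by apply/forallP => phi; rewrite -is_copyE.
have fG e : (f e != None) = (e \in G) by rewrite -domf inE.
pose c := [ffun e : edgeT G => odflt d (f (val e))].
have fc : pcoloring_of c = f.
  apply/ffunP => e; rewrite !ffunE /ecol.
  case: insubP => [u _ <-|/negbTE eG] /=; first rewrite ffunE.
    by move: (fG (val u)); rewrite (valP u); case: (f (val u)).
  by move: (fG e); rewrite eG; case: (f e).
exists c; last by rewrite fc.
by rewrite inE; apply/forallP => phi; rewrite is_copyE fc (forallP free_f).
Qed.

End ColoringsAsPartialColorings.

Section Glued.
Variables (T Z : finType).

Definition glued (A B : {set T}) (ka kb : T -> Z) :=
  [set p : T * T | (p.1 \in A) && (p.2 \in B) && (ka p.1 == kb p.2)].

Lemma card_glued A B ka kb :
  #|glued A B ka kb| =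
  \sum_(z : Z) #|[set a in A | ka a == z]| * #|[set b in B | kb b == z]|.
Proof.
rewrite -sum1dep_card (partition_big (fun p : T * T => ka p.1) predT) //.
apply: eq_bigr => z _; rewrite sum1dep_card -cardsX; apply: eq_card => -[a b].
rewrite !inE /=; case: (eqVneq (ka a) z) => [<-|]; rewrite ?andbF ?andbT //.
by rewrite eq_sym; case: (a \in A); case: (b \in B).
Qed.

Lemma leq_card_glued A B ka kb :
  2 * #|glued A B ka kb| <= #|glued A A ka ka| + #|glued B B kb kb|.
Proof.
rewrite !card_glued big_distrr -big_split /=; apply: leq_sum => z _.
exact: nat_Cauchy.
Qed.

End Glued.

Section Nonedge.
Variables (n k r : nat) (F : {set 'I_k} -> 'I_r) (G : {set {set 'I_n}}).
Hypothesis simpleG : simple_graph G.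

Definition del_vertex (w : 'I_n) (H : {set {set 'I_n}}) := [set e in H | w \notin e].

Lemma simple_card2 e : e \in G -> #|e| = 2.
Proof. by move=> eG; apply/eqP; move/forallP: simpleG => /(_ e); rewrite eG. Qed.

Lemma card2_set2 (e : {set 'I_n}) u w :
  #|e| = 2 -> u \in e -> w \in e -> u != w -> e = [set u; w].
Proof.
move=> e2 ue we uw; apply/eqP; rewrite eq_sym eqEcard cards2 uw e2 andbT.
by apply/subsetP => x; rewrite !inE => /orP[] /eqP ->.
Qed.

Lemma free_del_vertex_None w (H : {set {set 'I_n}}) g :
  g \in free_pcolorings F (del_vertex w H) -> forall e : {set 'I_n}, w \in e -> g e = None.
Proof.
rewrite inE => /andP[/eqP domg _] e we.
by apply/eqP/negPn; rewrite (pdom_neqNone _ domg) inE we andbF.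
Qed.

Variables (u w : 'I_n).
Hypotheses (uw : u != w) (nonedge : [set u; w] \notin G).

Lemma nonedge_not_both e : e \in G -> u \in e -> w \in e -> False.
Proof.
by move=> eG ue we; move: nonedge; rewrite -(card2_set2 (simple_card2 eG)) ?eG.
Qed.

Lemma del_vertex_nonedge a b : [set a; b] = [set u; w] ->
  [set e in G | (a \in e) ==> (b \in e)] = del_vertex a G.
Proof.
move=> ab; apply/setP => e; rewrite !inE.
case: (boolP (e \in G)) => //= eG; case: (boolP (a \in e)) => //= ae.
apply/negP => be; have {ae be} : [set a; b] \subset e by rewrite subUset !sub1set ae.
rewrite ab subUset !sub1set => /andP[ue we]; exact: nonedge_not_both eG ue we.
Qed.

Lemma card_free_nonedge :
  #|free_pcolorings F G| =
  #|glued (free_pcolorings F (del_vertex w G)) (free_pcolorings F (del_vertex u G))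
          (erase_at u w) (erase_at w u)|.
Proof.
have split_inj : injective (fun f : pcoloring n r => (erase_at w u f, erase_at u w f)).
  move=> f1 f2 [/ffunP E1 /ffunP E2]; apply/ffunP => e.
  by move: (E1 e) (E2 e); rewrite !ffunE; case: (w \in e); case: (u \in e).
have wu : [set w; u] = [set u; w] by rewrite setUC.
rewrite -(card_imset _ split_inj); apply: eq_card => -[g h]; rewrite [in RHS]inE /=.
apply/imsetP/idP => [[f] | ].
  rewrite inE => /andP[/eqP domf free_f] [-> ->]; rewrite !inE.
  have /eqP fuw : f [set u; w] == None by apply/negPn; rewrite (pdom_neqNone _ domf).
  rewrite (pfree_nonedge F uw fuw) in free_f; case/andP: free_f => -> ->.
  rewrite !pdom_erase_at domf (del_vertex_nonedge wu) (del_vertex_nonedge (erefl _)).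
  by rewrite erase_atC !eqxx.
move=> /andP[/andP[gA hA] /eqP gh].
have gw := free_del_vertex_None gA; have hu := free_del_vertex_None hA.
move: gA hA; rewrite !inE => /andP[/eqP domg free_g] /andP[/eqP domh free_h].
have [ew eu] := erase_at_glue gw hu gh.
exists (glue_at u w g h); last by rewrite ew eu.
have fuw : glue_at u w g h [set u; w] = None.
  by rewrite ffunE !inE !eqxx orbT /= gw // !inE eqxx orbT.
rewrite inE (pfree_nonedge F uw fuw) ew eu free_g free_h !andbT.
apply/eqP/setP => e; rewrite inE ffunE.
case: (boolP (u \in e)) => ue; case: (boolP (w \in e)) => we /=.
- by rewrite gw //; apply/esym/negP => eG; apply: nonedge_not_both eG ue we.
- by rewrite (pdom_neqNone _ domg) inE we andbT.
- by rewrite (pdom_neqNone _ domh) inE ue andbT.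
- by rewrite (pdom_neqNone _ domg) inE we andbT.
Qed.

End Nonedge.

Section Swap.
Variables (n k r : nat) (F : {set 'I_k} -> 'I_r) (u w : 'I_n).
Local Notation s := (tperm u w).

Lemma mem_tperm_imset x (S : {set 'I_n}) : (x \in s @: S) = (s x \in S).
Proof. by rewrite -{1}(tpermK u w x) mem_imset //; apply: perm_inj. Qed.

Lemma tperm_imsetK (S : {set 'I_n}) : s @: (s @: S) = S.
Proof. by apply/setP => x; rewrite !mem_tperm_imset tpermK. Qed.

Lemma tperm_imset_fix (S : {set 'I_n}) : (u \in S) = (w \in S) -> s @: S = S.
Proof.
move=> uwS; apply/setP => x; rewrite mem_tperm_imset.
by case: tpermP => [->|->|//]; rewrite uwS.
Qed.

Lemma tperm_imset2 a b : s @: [set a; b] = [set s a; s b].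
Proof. by rewrite imsetU1 imset_set1. Qed.

Definition pswap (f : pcoloring n r) : pcoloring n r :=
  [ffun e : {set 'I_n} => f (s @: e)].

Lemma pswapK : involutive pswap.
Proof. by move=> f; apply/ffunP => e; rewrite !ffunE tperm_imsetK. Qed.

Lemma pcopy_pswap f (phi : {ffun 'I_k -> 'I_n}) :
  pcopy F (pswap f) phi = pcopy F f [ffun i => s (phi i)].
Proof.
rewrite /pcopy; congr (_ && _ && _).
- apply/injectiveP/injectiveP => inj_phi i j; rewrite ?ffunE.
    by move/perm_inj; apply: inj_phi.
  by move=> phi_ij; apply: inj_phi; rewrite !ffunE phi_ij.
- by do 2 apply: eq_forallb => ?; rewrite !ffunE tperm_imset2.
- by do 4 apply: eq_forallb => ?; rewrite !ffunE !tperm_imset2.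
Qed.

Lemma pfree_pswap f : pfree F (pswap f) = pfree F f.
Proof.
apply/forallP/forallP => free_f phi; last by rewrite pcopy_pswap.
have := free_f [ffun i => s (phi i)]; rewrite pcopy_pswap.
by congr (~~ pcopy _ _ _); apply/ffunP => i; rewrite !ffunE tpermK.
Qed.

Lemma erase_at_pswap (g : pcoloring n r) :
  (forall e : {set 'I_n}, w \in e -> g e = None) ->
  erase_at w u (pswap g) = erase_at u w g.
Proof.
move=> gw; apply/ffunP => e; rewrite !ffunE.
case: (boolP (u \in e)) => ue; case: (boolP (w \in e)) => we /=.
- by rewrite tperm_imset_fix ?ue ?we.
- by rewrite gw // mem_tperm_imset tpermR.
- by rewrite gw.
- by rewrite tperm_imset_fix // (negbTE ue) (negbTE we).
Qed.

End Swap.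

Section Clone.
Variables (n k r : nat) (F : {set 'I_k} -> 'I_r).

Definition nbhd (G : {set {set 'I_n}}) (v : 'I_n) := [set t | [set v; t] \in G].

(* [clone G u w] replaces [w] by a twin of its non-neighbour [u]. *)
Definition clone (G : {set {set 'I_n}}) (u w : 'I_n) :=
  del_vertex w G :|: [set [set w; t] | t in nbhd G u].

Lemma card2_set2l (e : {set 'I_n}) u : #|e| = 2 -> u \in e ->
  exists2 t, t != u & e = [set u; t].
Proof.
move=> /eqP/cards2P[x [y [xy ->]]]; rewrite !inE => /orP[] /eqP ->.
  by exists y; rewrite // eq_sym.
by exists x; rewrite // setUC.
Qed.

Variables (G : {set {set 'I_n}}) (u w : 'I_n).
Hypotheses (simpleG : simple_graph G) (uw : u != w) (nonedge : [set u; w] \notin G).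

Lemma nbhd_irrefl a : a \notin nbhd G a.
Proof. by rewrite inE setUid; apply/negP => /(simple_card2 simpleG); rewrite cards1. Qed.

Lemma nbhd_neq t : t \in nbhd G u -> t != u /\ t != w.
Proof. by move=> ut; split; apply: contraTneq ut => ->; rewrite ?nbhd_irrefl ?inE. Qed.

Lemma simple_clone : simple_graph (clone G u w).
Proof.
apply/forallP => e; apply/implyP; rewrite !inE => /orP[/andP[eG _]|].
  by rewrite (simple_card2 simpleG eG).
by case/imsetP => t /nbhd_neq[_ tw] ->; rewrite cards2 (eq_sym w) tw.
Qed.

Lemma clone_nonedge : [set u; w] \notin clone G u w.
Proof.
rewrite !inE !eqxx orbT andbF /=; apply/imsetP => -[t /nbhd_neq[tu _] uwt].
have : u \in [set w; t] by rewrite -uwt !inE eqxx.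
by rewrite !inE (negbTE uw) eq_sym (negbTE tu).
Qed.

Lemma del_vertex_clone : del_vertex w (clone G u w) = del_vertex w G.
Proof.
apply/setP => e; rewrite !inE; case: (boolP (w \in e)) => we; rewrite ?andbF //.
rewrite !andbT orb_idr // => /imsetP[t _ et].
by move: we; rewrite et !inE eqxx.
Qed.

Lemma tperm_del_vertex_clone (e : {set 'I_n}) :
  (tperm u w @: e \in del_vertex u (clone G u w)) = (e \in del_vertex w G).
Proof.
rewrite !inE !mem_tperm_imset tpermL tpermR.
case: (boolP (w \in e)) => we; rewrite ?andbF ?andbT //.
case: (boolP (u \in e)) => ue; rewrite /= ?andbT ?andbF /=; last first.
  rewrite tperm_imset_fix ?(negbTE ue) ?(negbTE we) // orb_idr // => /imsetP[t _ et].
  by move: we; rewrite et !inE eqxx.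
apply/imsetP/idP => [[t ut et] | eG].
  have [tu tw] := nbhd_neq ut.
  move: ut; rewrite inE -(tperm_imsetK u w e) et tperm_imset2 tpermR.
  by rewrite tpermD 1?(eq_sym u) 1?(eq_sym w).
have [t tu et] := card2_set2l (simple_card2 simpleG eG) ue.
have tw : t != w by apply: contraNneq we => tw; rewrite et tw !inE eqxx orbT.
exists t; first by rewrite inE -et.
by rewrite et tperm_imset2 tpermL tpermD 1?(eq_sym u) 1?(eq_sym w).
Qed.

Lemma pswap_free_clone (h : pcoloring n r) :
  (pswap u w h \in free_pcolorings F (del_vertex w G)) =
  (h \in free_pcolorings F (del_vertex u (clone G u w))).
Proof.
rewrite !inE pfree_pswap; congr (_ && _).
apply/eqP/eqP => domh; apply/setP => e.
  by rewrite -(tperm_imsetK u w e) tperm_del_vertex_clone -domh !inE !ffunE tperm_imsetK.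
by rewrite -tperm_del_vertex_clone -domh !inE !ffunE.
Qed.

Lemma card_free_clone :
  #|free_pcolorings F (clone G u w)| =
  #|glued (free_pcolorings F (del_vertex w G)) (free_pcolorings F (del_vertex w G))
          (erase_at u w) (erase_at u w)|.
Proof.
set A := free_pcolorings F (del_vertex w G).
rewrite (card_free_nonedge F simple_clone uw clone_nonedge) del_vertex_clone.
have swap2_inj : injective (fun p : pcoloring n r * pcoloring n r => (p.1, pswap u w p.2)).
  by move=> [g1 h1] [g2 h2] [/= -> /(can_inj (pswapK u w))->].
rewrite -(card_imset _ swap2_inj); apply: eq_card => -[g h]; rewrite [in RHS]inE /=.
apply/imsetP/idP => [[[g' h']] | /andP[/andP[gA hA] /eqP gh]].
  rewrite inE /= => /andP[/andP[gA hB] /eqP gh] [-> ->].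
  have hA : pswap u w h' \in A by rewrite pswap_free_clone.
  by rewrite gA hA -(erase_at_pswap u (free_del_vertex_None hA)) pswapK gh eqxx.
exists (g, pswap u w h); last by rewrite /= pswapK.
rewrite inE /= gA -pswap_free_clone pswapK hA.
by rewrite (erase_at_pswap u (free_del_vertex_None hA)) gh eqxx.
Qed.

End Clone.

Lemma sum_mem_card (T : finType) (A : {set T}) : \sum_a (a \in A : nat) = #|A|.
Proof. by rewrite -sum1_card [RHS]big_mkcond; apply: eq_bigr => a _; case: (a \in A). Qed.

Section Twins.
Variable n : nat.
Implicit Types (G : {set {set 'I_n}}) (a b t : 'I_n).

Definition twins G a := [set b | nbhd G b == nbhd G a].

(* Equals the sum of the squared sizes of the twin classes. *)
Definition twin_weight G := \sum_a #|twins G a|.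

Lemma nbhdC G a b : (a \in nbhd G b) = (b \in nbhd G a).
Proof. by rewrite !inE setUC. Qed.

Lemma twins_sym G a b : (a \in twins G b) = (b \in twins G a).
Proof. by rewrite !inE eq_sym. Qed.

Lemma twin_weightE G w :
  (twin_weight G).+1 = \sum_(a | a != w) #|twins G a :\ w| + 2 * #|twins G w|.
Proof.
have Tw : #|twins G w| = #|twins G w :\ w| + 1 by rewrite (cardsD1 w) inE eqxx addnC.
rewrite /twin_weight (eq_bigr (fun a => #|twins G a :\ w| + (a \in twins G w))).
  rewrite big_split /= sum_mem_card (bigD1 w) //= Tw.
  by set x := #|_ :\ w|; lia.
by move=> a _; rewrite (cardsD1 w) addnC twins_sym.
Qed.

End Twins.

Section CloneTwins.
Variables (n : nat) (G : {set {set 'I_n}}) (u w : 'I_n).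
Hypotheses (simpleG : simple_graph G) (uw : u != w) (nonedge : [set u; w] \notin G).
Local Notation H := (clone G u w).

Lemma nbhd_clone_w : nbhd H w = nbhd G u.
Proof.
apply/setP => t; rewrite [in LHS]inE !inE eqxx andbF /=.
apply/imsetP/idP => [[t' ut' wt_wt'] | ut]; last by exists t; rewrite // inE.
have [t'u t'w] := nbhd_neq simpleG nonedge ut'.
have : t \in [set w; t'] by rewrite -wt_wt' !inE eqxx orbT.
rewrite !inE => /orP[/eqP tw | /eqP ->]; last by rewrite inE in ut'.
have : t' \in [set w; t] by rewrite wt_wt' !inE eqxx orbT.
by rewrite tw setUid inE (negbTE t'w).
Qed.

Lemma nbhd_clone a t : a != w ->
  (t \in nbhd H a) = if t == w then a \in nbhd G u else t \in nbhd G a.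
Proof.
move=> aw; rewrite [in LHS]inE !inE.
case: (eqVneq t w) => [-> | tw].
  rewrite orbT andbF /=; apply/imsetP/idP => [[t' ut' at_wt'] | ua].
    have : a \in [set w; t'] by rewrite -at_wt' !inE eqxx.
    by rewrite !inE (negbTE aw) /= => /eqP ->; rewrite inE in ut'.
  by exists a; rewrite ?inE // setUC.
rewrite (eq_sym w a) (negbTE aw) /= andbT orb_idr //.
case/imsetP => t' _ at_wt'.
have : w \in [set a; t] by rewrite at_wt' !inE eqxx.
by rewrite !inE (eq_sym w a) (eq_sym w t) (negbTE aw) (negbTE tw).
Qed.

Lemma nbhd_clone_twins a b : a != w -> b != w ->
  nbhd G a = nbhd G b -> nbhd H a = nbhd H b.
Proof.
move=> aw bw ab; apply/setP => t; rewrite !nbhd_clone //.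
by case: (t == w); rewrite ?(nbhdC G a u) ab -?(nbhdC G b u).
Qed.

Hypothesis not_twins : nbhd G u != nbhd G w.

Lemma notin_twins : w \notin twins G u.
Proof. by rewrite inE eq_sym. Qed.

Lemma nbhd_clone_twin a : a \in w |: twins G u -> nbhd H a = nbhd G u.
Proof.
rewrite !inE => /orP[/eqP -> | /eqP au]; first exact: nbhd_clone_w.
have aw : a != w by apply: contraNneq notin_twins => <-; rewrite inE au.
apply/setP => t; rewrite nbhd_clone //; case: (eqVneq t w) => [-> | _]; last by rewrite au.
by rewrite (nbhdC G a) au (negbTE (nbhd_irrefl simpleG u)) inE (negbTE nonedge).
Qed.

Lemma card_twins_clone_twin a : a \in w |: twins G u -> #|twins G u| < #|twins H a|.
Proof.
move=> aT; have := cardsU1 w (twins G u); rewrite notin_twins add1n => <-.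
apply/subset_leq_card/subsetP => b bT.
by rewrite inE (nbhd_clone_twin aT) (nbhd_clone_twin bT).
Qed.

Lemma card_twins_clone a : a != w ->
  #|twins G a :\ w| + (a \in twins G u) <= #|twins H a|.
Proof.
move=> aw; case: (boolP (a \in twins G u)) => aT /=.
  rewrite addn1 (leq_trans _ (card_twins_clone_twin (setU1r w aT))) // ltnS.
  apply: leq_trans (subset_leq_card (subsetDl _ _)) _.
  by move: aT; rewrite inE => /eqP au; apply/eq_leq/eq_card => b; rewrite !inE au.
rewrite addn0; apply: subset_leq_card; apply/subsetP => b.
by rewrite !inE => /andP[bw /eqP ba]; apply/eqP/nbhd_clone_twins.
Qed.

Lemma twin_weight_clone : #|twins G w| <= #|twins G u| -> twin_weight G < twin_weight H.
Proof.
move=> Tw_Tu; rewrite -ltnS (twin_weightE G w) ltnS /twin_weight [leqRHS](bigD1 w) //=.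
have sum_Tu : \sum_(a | a != w) (a \in twins G u : nat) = #|twins G u|.
  by rewrite -sum_mem_card [RHS](bigD1 w) //= (negbTE notin_twins).
have : \sum_(a | a != w) (#|twins G a :\ w| + (a \in twins G u)) <=
        \sum_(a | a != w) #|twins H a| by apply: leq_sum => a; apply: card_twins_clone.
rewrite big_split /= sum_Tu.
have := card_twins_clone_twin (setU11 w _).
move: Tw_Tu; set x := #|twins G u|; set y := #|twins G w|; set z := #|twins H w|.
lia.
Qed.

End CloneTwins.

Section Extremal.
Variables (n k r : nat) (F : {set 'I_k} -> 'I_r) (d : 'I_r).

Definition extremalb (G : {set {set 'I_n}}) := simple_graph G &&
  [forall G' : {set {set 'I_n}}, simple_graph G' ==> (count_free G' F <= count_free G F)].

Lemma extremalP G : reflect (extremal F G) (extremalb G).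
Proof.
apply: (iffP andP) => -[simpleG maxG]; split=> //.
  by move=> G' /(implyP (forallP maxG G')).
by apply/forallP => G'; apply/implyP/maxG.
Qed.

(* By [leq_card_glued] the two clones have at least twice as many colorings as
   G together, so neither can have fewer. *)
Lemma count_free_clone (G : {set {set 'I_n}}) u w :
  extremal F G -> u != w -> [set u; w] \notin G ->
  count_free (clone G u w) F = count_free G F.
Proof.
move=> [simpleG maxG] uw nonedge.
have wu : w != u by rewrite eq_sym.
have nonedge' : [set w; u] \notin G by rewrite setUC.
have := maxG _ (simple_clone simpleG nonedge).
have := maxG _ (simple_clone simpleG nonedge').
rewrite !(count_freeE F d) (card_free_clone F simpleG uw nonedge).
rewrite (card_free_clone F simpleG wu nonedge') (card_free_nonedge F simpleG uw nonedge).
have := leq_card_glued (free_pcolorings F (del_vertex w G))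
  (free_pcolorings F (del_vertex u G)) (erase_at u w) (erase_at w u).
lia.
Qed.

Lemma extremal_clone (G : {set {set 'I_n}}) u w :
  extremal F G -> u != w -> [set u; w] \notin G -> extremal F (clone G u w).
Proof.
move=> extG uw nonedge; have [simpleG maxG] := extG.
split; first exact: simple_clone.
by move=> G' /maxG; rewrite count_free_clone.
Qed.

Lemma extremal_nonedge_twins (G : {set {set 'I_n}}) :
  extremal F G ->
  (forall G' : {set {set 'I_n}}, extremal F G' -> twin_weight G' <= twin_weight G) ->
  forall u w, u != w -> [set u; w] \notin G -> nbhd G u = nbhd G w.
Proof.
move=> extG maxT u w uw nonedge; apply/eqP/negPn/negP => not_twins.
wlog Tw_Tu : u w uw nonedge not_twins / #|twins G w| <= #|twins G u|.
  move=> hyp; case: (leqP #|twins G w| #|twins G u|) => [|/ltnW]; first exact: hyp.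
  by apply: hyp; rewrite 1?eq_sym 1?setUC.
have := maxT _ (extremal_clone extG uw nonedge).
by rewrite leqNgt (twin_weight_clone extG.1 uw nonedge not_twins Tw_Tu).
Qed.

End Extremal.

Lemma nonedge_twins_multipartite n (G : {set {set 'I_n}}) : simple_graph G ->
  (forall u w, u != w -> [set u; w] \notin G -> nbhd G u = nbhd G w) ->
  complete_multipartite G.
Proof.
move=> simpleG twinsG; exists (fun x => val (enum_rank (nbhd G x))) => e.
have partE u v : (val (enum_rank (nbhd G u)) != val (enum_rank (nbhd G v))) =
                 (nbhd G u != nbhd G v).
  by rewrite (inj_eq val_inj) (inj_eq enum_rank_inj).
apply/idP/existsP => [eG | [u /existsP[v /andP[]]]].
  have /eqP/cards2P[x [y [xy exy]]] := simple_card2 simpleG eG.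
  exists x; apply/existsP; exists y; rewrite partE exy eqxx andbT.
  apply: contraNneq (nbhd_irrefl simpleG y) => <-.
  by rewrite inE -exy.
rewrite partE => not_twins /eqP ->.
have uv : u != v by apply: contraNneq not_twins => ->.
by apply/negPn/negP => nonedge; rewrite (twinsG _ _ uv nonedge) eqxx in not_twins.
Qed.

Theorem theorem1p1 (r k : nat) (F : {set 'I_k} -> 'I_r) (n : nat) :
  2 <= r -> 3 <= k ->
  exists G : {set {set 'I_n}}, complete_multipartite G /\ extremal F G.
Proof.
move=> r2 _; have d : 'I_r := Ordinal (ltnW r2).
have simple0 : simple_graph (set0 : {set {set 'I_n}}) by apply/forallP => e; rewrite inE.
have [G0 simpleG0 maxG0] := arg_maxnP (fun G => count_free G F) simple0.
have extG0 : extremalb F G0 by apply/extremalP; split=> // G' /maxG0.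
have [G /extremalP extG maxT] := arg_maxnP (@twin_weight n) extG0.
exists G; split=> //; apply: nonedge_twins_multipartite extG.1 _.
by move=> u w; apply: (extremal_nonedge_twins d extG) => G' /extremalP /maxT.
Qed.
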